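(* Let $G=(V,\Sigma,R,S)$ be a context-free grammar in Greibach Normal Form. For all $w,z\in\Sigma^*$: if $\pi_S(w)=\pi_S(z)$, then $w\backslash L(G)=z\backslash L(G)$.
   Context: A context-free grammar $G=(V,\Sigma,R,S)$ in Greibach Normal Form has every production of the form $S\to\epsilon$ or $A\to a\,\beta$ with $a\in\Sigma$, $\beta\in(V\setminus\{S\})^*$; $L(G)$ is its language. Let $\delta_G(a,A)=\{\beta\in V^*:(A\to a\,\beta)\in R\}$. Define $\pi:\Sigma^*\times V^*\to\mathcal{P}(V^* )$ recursively by $\pi(t,\alpha)=\{\alpha\}$ if $t=\epsilon$; $\pi(t,\alpha)=\emptyset$ if $t\neq\epsilon$ and $\alpha=\epsilon$; and otherwise $\pi(t,\alpha)=\bigcup_{\beta\in\delta_G(t_0,\alpha_0)}\pi(t_{1:},\beta\alpha_{1:})$, where $t_0$ is the first character of $t$, $t_{1:}$ the rest of $t$, $\alpha_0$ the first symbol of $\alpha$ and $\alpha_{1:}$ the rest of $\alpha$. Let $\pi_S(t)=\pi(t,S)$ (the stack consisting of the single symbol $S$). A string $x$ belongs to $L(G)$ iff $\epsilon\in\pi_S(x)$. The left quotient of a language $L$ by $w\in\Sigma^*$ is $w\backslash L=\{z\in\Sigma^*: wz\in L\}$. *)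

From mathcomp Require Import all_boot.
Set Implicit Arguments. Unset Strict Implicit. Unset Printing Implicit Defensive.

Record cfg (V Sigma : finType) := CFG {
  rules : seq (V * seq (Sigma + V));
  start : V }.

Definition is_GNF (V Sigma : finType) (G : cfg V Sigma) : Prop :=
  forall A rhs, (A, rhs) \in rules G ->
    (A = start G /\ rhs = [::]) \/
    exists a beta, rhs = inl a :: map inr beta /\ start G \notin beta.

Inductive step (V Sigma : finType) (G : cfg V Sigma) :
  seq (Sigma + V) -> seq (Sigma + V) -> Prop :=
| Step u A rhs v : (A, rhs) \in rules G ->
    step G (u ++ inr A :: v) (u ++ rhs ++ v).

Inductive derives (V Sigma : finType) (G : cfg V Sigma) :
  seq (Sigma + V) -> seq (Sigma + V) -> Prop :=
| derives_refl s : derives G s s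
| derives_step s t r : step G s t -> derives G t r -> derives G s r.

Definition lang (V Sigma : finType) (G : cfg V Sigma) (x : seq Sigma) : Prop :=
  derives G [:: inr (start G)] (map inl x).

Definition lquot (Sigma : Type) (w : seq Sigma) (L : seq Sigma -> Prop) :
  seq Sigma -> Prop := fun z => L (w ++ z).

(* delta_G(a, A) = { beta in V^* | (A -> a beta) in R } *)
Definition delta (V Sigma : finType) (G : cfg V Sigma) (a : Sigma) (A : V) :
  seq (seq V) :=
  [seq map (fun s => if s is inr B then B else A) (behead p.2)
  | p <- rules G & (p.1 == A) &&
      match p.2 with
      | inl b :: rest => (b == a) && all (fun s => if s is inr _ then true else false) rest
      | _ => false end].

(* pi(t, alpha), as a list of stacks (read as a set) *)
Fixpoint pi (V Sigma : finType) (G : cfg V Sigma) (t : seq Sigma) (alpha : seq V)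
  : seq (seq V) :=
  match t with
  | [::] => [:: alpha]
  | t0 :: t' =>
    match alpha with
    | [::] => [::]
    | a0 :: alpha' => flatten [seq pi G t' (beta ++ alpha') | beta <- delta G t0 a0]
    end
  end.

Definition pi_S (V Sigma : finType) (G : cfg V Sigma) (t : seq Sigma) :=
  pi G t [:: start G].

From Pilot Require Import Defs.
From mathcomp Require Import all_boot.
Set Implicit Arguments. Unset Strict Implicit. Unset Printing Implicit Defensive.

(* In Greibach normal form a leftmost derivation is a pushdown computation:
   reading the next terminal pops the leftmost nonterminal A of the stack and
   pushes the body beta of a rule A -> a beta.  Hence w x is in L(G) exactly
   when some stack of pi_S(w) derives x, so the left quotient of L(G) by w
   depends on w only through pi_S(w). *)

Section Yields.
Variables (V Sigma : finType) (G : cfg V Sigma).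

(* A tree-shaped form of [derives G s (map inl x)], which unlike [derives]
   splits along concatenations of sentential forms. *)
Inductive yields : seq (Sigma + V) -> seq Sigma -> Prop :=
| yields_nil : yields [::] [::]
| yields_term a s x : yields s x -> yields (inl a :: s) (a :: x)
| yields_nonterm A rhs s y x : (A, rhs) \in rules G -> yields rhs y ->
    yields s x -> yields (inr A :: s) (y ++ x).

Lemma yields_nil_inv x : yields [::] x -> x = [::].
Proof. by move=> H; inversion H. Qed.

Lemma yields_term_inv a s x : yields (inl a :: s) x ->
  exists2 y, x = a :: y & yields s y.
Proof. by move=> H; inversion H; subst; exists x0. Qed.

Lemma yields_nonterm_inv A s x : yields (inr A :: s) x ->
  exists rhs y1 y2,
    [/\ (A, rhs) \in rules G, yields rhs y1, yields s y2 & x = y1 ++ y2].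
Proof. by move=> H; inversion H; subst; exists rhs, y, x0. Qed.

Lemma yields_cat p q x1 x2 :
  yields p x1 -> yields q x2 -> yields (p ++ q) (x1 ++ x2).
Proof.
move=> Hp Hq; elim: Hp => //= [a s x _ IH | A rhs s y x Hr Hy _ _ IH].
  exact: yields_term.
by rewrite -catA; apply: yields_nonterm Hr Hy IH.
Qed.

Lemma yields_cat_inv p q x : yields (p ++ q) x ->
  exists x1 x2, [/\ x = x1 ++ x2, yields p x1 & yields q x2].
Proof.
elim: p x => [|[a | A] p IH] x /=.
- by move=> Hq; exists [::], x; split=> //; apply: yields_nil.
- case/yields_term_inv=> y -> /IH [x1 [x2 [-> Hp Hq]]].
  by exists (a :: x1), x2; split=> //; apply: yields_term.
- case/yields_nonterm_inv=> rhs [y [y' [Hr Hy /IH [x1 [x2 [-> Hp Hq]]] ->]]].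
  by exists (y ++ x1), x2; rewrite catA; split=> //; apply: yields_nonterm Hr Hy Hp.
Qed.

Lemma yields_terminals x : yields (map inl x) x.
Proof. by elim: x => [|a x IH]; [apply: yields_nil | apply: yields_term]. Qed.

Lemma derives_trans s t r : derives G s t -> derives G t r -> derives G s r.
Proof. by elim=> // s0 t0 r0 Hst _ IH /IH; apply: derives_step. Qed.

Lemma derives_cat u v s t :
  derives G s t -> derives G (u ++ s ++ v) (u ++ t ++ v).
Proof.
elim=> [s0 | s0 t0 r0 [u0 A rhs v0 Hr] _ IH]; first exact: derives_refl.
apply: derives_step IH.
by have := Step (u ++ u0) (v0 ++ v) Hr; rewrite -!catA.
Qed.

Lemma yields_derives s x : yields s x -> derives G s (map inl x).
Proof.
elim=> [|a s0 x0 _ IH|A rhs s0 y x0 Hr _ IHy _ IHx]; first exact: derives_refl.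
  by have := derives_cat [:: inl a] [::] IH; rewrite !cats0.
apply: derives_step (Step [::] s0 Hr) _ => /=.
apply: derives_trans (derives_cat [::] s0 IHy) _.
by rewrite map_cat; have := derives_cat (map inl y) [::] IHx; rewrite !cats0.
Qed.

Lemma derives_yields s x : derives G s (map inl x) -> yields s x.
Proof.
move Ex : (map (@inl Sigma V) x) => r Hd.
elim: Hd Ex => [s0 <- | s0 t0 r0 Hst _ IH Ex].
  exact: yields_terminals.
case: Hst (IH Ex) => u A rhs v Hr /yields_cat_inv [x1 [x2 [-> Hu]]].
case/yields_cat_inv=> y [x3 [-> Hrhs Hv]].
by apply: yields_cat Hu _; apply: yields_nonterm Hr Hrhs Hv.
Qed.

Lemma lang_yields x : lang G x <-> yields [:: inr (start G)] x.
Proof. by split=> [/derives_yields | /yields_derives]. Qed.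

Lemma mem_delta a A beta :
  (beta \in delta G a A) = ((A, inl a :: map inr beta) \in rules G).
Proof.
apply/mapP/idP => [[[A' rhs]] | Hr].
  rewrite mem_filter /= => /andP [/andP [/eqP -> Hrhs] Hr] ->.
  case: rhs Hrhs Hr => [|[b | //] rest] //= /andP [/eqP -> Hrest].
  suff -> : map inr (map (fun s => if s is inr C then C else A) rest) = rest
    by [].
  by elim: rest Hrest => [|[c | B] rest IH] //= /IH ->.
exists (A, inl a :: map inr beta); last by rewrite /= -map_comp map_id.
by rewrite mem_filter Hr /= !eqxx /=; elim: beta {Hr}.
Qed.

Hypothesis GNF_G : is_GNF G.

Lemma GNF_rule_body_start_free A a beta :
  (A, inl a :: map inr beta) \in rules G -> start G \notin beta.
Proof.
case/GNF_G=> [[_ //] | [b [gamma [[_ /(inj_map (@inr_inj _ _)) ->] //]]]].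
Qed.

(* The start symbol may only stand alone on the stack: S -> eps is the only
   erasing rule, and pi never applies it below the top of the stack. *)
Definition proper_stack (alpha : seq V) :=
  alpha = [:: start G] \/ start G \notin alpha.

Lemma proper_stack_tail A alpha :
  proper_stack (A :: alpha) -> start G \notin alpha.
Proof. by case=> [[_ ->] // | ]; rewrite inE negb_or => /andP []. Qed.

Lemma yields_pop a A alpha y : proper_stack (A :: alpha) ->
  yields (map inr (A :: alpha)) (a :: y) <->
  exists2 beta, beta \in delta G a A & yields (map inr (beta ++ alpha)) y.
Proof.
move=> Halpha; split=> [|[beta]].
  case/yields_nonterm_inv=> rhs [y1 [y2 [Hr Hrhs Hy2 Ey]]].
  case: (GNF_G Hr) => [[EA Erhs] | [b [beta [Erhs _]]]]; subst rhs.
    have Ealpha : alpha = [::].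
      by case: Halpha => [[_ ->] // | ]; rewrite EA inE eqxx.
    by move: Hy2 Ey; rewrite Ealpha (yields_nil_inv Hrhs) => /yields_nil_inv ->.
  case/yields_term_inv: Hrhs Ey => y1' -> Hy1 [-> ->].
  by exists beta; rewrite ?mem_delta // map_cat; apply: yields_cat.
rewrite mem_delta map_cat => Hr /yields_cat_inv [y1 [y2 [-> Hy1 Hy2]]].
exact: yields_nonterm Hr (yields_term a Hy1) Hy2.
Qed.

Lemma yields_pi t alpha x : proper_stack alpha ->
  yields (map inr alpha) (t ++ x) <->
  exists2 beta, beta \in Defs.pi G t alpha & yields (map inr beta) x.
Proof.
elim: t alpha => [|a t IH] alpha Halpha /=.
  by split=> [Hx | [beta /[1!inE] /eqP ->]]; first exists alpha; rewrite ?inE.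
case: alpha Halpha => [_ | A alpha Halpha].
  by split=> [/yields_nil_inv | []].
have proper_push beta : beta \in delta G a A -> proper_stack (beta ++ alpha).
  rewrite mem_delta => /GNF_rule_body_start_free Hbeta; right.
  by rewrite mem_cat negb_or Hbeta (proper_stack_tail Halpha).
split=> [/(yields_pop _ _ Halpha) [beta Hbeta] | [gamma]].
  case/(IH _ (proper_push _ Hbeta)) => gamma Hgamma Hx.
  exists gamma => //; apply/flattenP.
  by exists (Defs.pi G t (beta ++ alpha)) => //; apply: map_f.
case/flattenP=> _ /mapP [beta Hbeta ->] Hgamma Hx.
apply/(yields_pop _ _ Halpha); exists beta => //.
by apply/(IH _ (proper_push _ Hbeta)); exists gamma.
Qed.

Lemma lquot_lang_pi_S w x : lquot w (lang G) x <->
  exists2 beta, beta \in pi_S G w & yields (map inr beta) x.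
Proof.
have Hstart : proper_stack [:: start G] by left.
by split=> [/lang_yields/(yields_pi _ _ Hstart)
           | /(yields_pi _ _ Hstart)/lang_yields].
Qed.

End Yields.

Theorem lemma2 (V Sigma : finType) (G : cfg V Sigma) (w z : seq Sigma) :
  is_GNF G ->
  pi_S G w =i pi_S G z ->
  forall x, lquot w (lang G) x <-> lquot z (lang G) x.
Proof.
move=> GNF_G Ewz x.
split=> /(lquot_lang_pi_S GNF_G) [beta Hbeta Hx]; apply/(lquot_lang_pi_S GNF_G).
  by exists beta; rewrite -?Ewz.
by exists beta; rewrite ?Ewz.
Qed.
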